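(* Let $\mathcal{V}$ be an equational class and $\mathbf{A}\in\mathsf{FP}(\mathcal{V})$. (a) For any onto homomorphism $u\colon\mathbf{A}\to\mathbf{B}$: $u\in\mathsf{C}_{\mathcal{V}}(\mathbf{A})$ iff $\ker(u)\in\mathrm{Con}_e(\mathbf{A})$. (b) For all $u,v\in\mathsf{C}_{\mathcal{V}}(\mathbf{A})$: $u\le v$ iff $\ker(v)\subseteq\ker(u)$. Hence $\ker\colon\mathsf{C}_{\mathcal{V}}(\mathbf{A})\to\mathrm{Con}_e(\mathbf{A})$ determines an equivalence between the preordered sets $(\mathsf{C}_{\mathcal{V}}(\mathbf{A}),\le)$ and $(\mathrm{Con}_e(\mathbf{A}),\supseteq)$ (that is, every $\theta\in\mathrm{Con}_e(\mathbf{A})$ is equivalent in the preorder to $\ker(u)$ for some $u\in\mathsf{C}_{\mathcal{V}}(\mathbf{A})$, and $u\le v$ iff $\ker(u)\supseteq\ker(v)$), and $\mathrm{type}(\mathsf{C}_{\mathcal{V}}(\mathbf{A}))=\mathrm{type}(\mathrm{Con}_e(\mathbf{A}))$.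
   Context: $\mathsf{FP}(\mathcal{V})$ is the class of finitely presented algebras of $\mathcal{V}$ (quotients of a finitely generated free algebra $\mathbf{F}_{\mathcal{V}}(X)$ by a congruence generated by finitely many pairs). $\mathbf{F}_{\mathcal{V}}(\omega)$ is the free algebra of $\mathcal{V}$ on countably infinitely many generators. An algebra is exact in $\mathcal{V}$ if it is isomorphic to a finitely generated subalgebra of $\mathbf{F}_{\mathcal{V}}(\omega)$. A coexact unifier of $\mathbf{A}\in\mathsf{FP}(\mathcal{V})$ is an onto homomorphism $u\colon\mathbf{A}\to\mathbf{E}$ with $\mathbf{E}$ exact in $\mathcal{V}$; for coexact unifiers $u\colon\mathbf{A}\to\mathbf{E}_u$, $v\colon\mathbf{A}\to\mathbf{E}_v$, $u\le v$ iff there is a homomorphism $f\colon\mathbf{E}_v\to\mathbf{E}_u$ with $f\circ v=u$; $\mathsf{C}_{\mathcal{V}}(\mathbf{A})$ is the set of coexact unifiers preordered by $\le$. $\mathrm{Con}_e(\mathbf{A})$ is the set of congruences $\theta$ of $\mathbf{A}$ such that $\mathbf{A}/\theta$ is isomorphic to a subalgebra of $\mathbf{F}_{\mathcal{V}}(\omega)$. Types of a nonempty preordered set: via $\mu$-sets (complete sets — every element lies below a member — of pairwise incomparable elements): $0$ if none exists, $\infty$ if infinite, $\omega$ if finite of size $>1$, $1$ if of size $1$. *)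

From mathcomp Require Import ssreflect ssrfun ssrbool eqtype ssrnat seq fintype.
From Stdlib Require Import ClassicalEpsilon.
From Stdlib Require List.

Set Implicit Arguments.
Unset Strict Implicit.
Unset Printing Implicit Defensive.

Record signature := Signature { op : Type; arity : op -> nat }.

Section UA.
Variable S : signature.

Record algebra := Algebra {
  carrier :> Type;
  interp : forall o : op S, ('I_(arity o) -> carrier) -> carrier }.

Inductive term (X : Type) : Type :=
  | Var : X -> term X
  | App : forall o : op S, ('I_(arity o) -> term X) -> term X.

Fixpoint eval (A : algebra) (X : Type) (g : X -> A) (t : term X) {struct t} : A :=
  match t with
  | Var x => g x
  | App o args => @interp A o (fun i => eval g (args i))
  end.

Definition term_alg (X : Type) : algebra := @Algebra (term X) (@App X).

Definition hom (A B : algebra) (f : A -> B) : Prop :=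
  forall o (args : 'I_(arity o) -> A), f (@interp A o args) = @interp B o (fun i => f (args i)).

Definition surjective (A B : Type) (f : A -> B) : Prop := forall b, exists a, f a = b.

Definition congruence (A : algebra) (th : A -> A -> Prop) : Prop :=
  [/\ (forall a, th a a), (forall a b, th a b -> th b a),
      (forall a b c, th a b -> th b c -> th a c) &
      (forall o (a b : 'I_(arity o) -> A), (forall i, th (a i) (b i)) ->
          th (@interp A o a) (@interp A o b))].

Definition ker (A B : Type) (f : A -> B) : A -> A -> Prop := fun a b => f a = f b.

Definition qcar (A : Type) (th : A -> A -> Prop) : Type :=
  {P : A -> Prop | exists a, P = th a}.
Definition qcls (A : Type) (th : A -> A -> Prop) (a : A) : qcar th :=
  exist _ (th a) (ex_intro _ a erefl).
Definition qrep (A : Type) (th : A -> A -> Prop) (x : qcar th) : A :=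
  proj1_sig (constructive_indefinite_description _ (proj2_sig x)).
Definition quot_alg (A : algebra) (th : A -> A -> Prop) : algebra :=
  @Algebra (qcar th) (fun o args => qcls th (@interp A o (fun i => qrep (args i)))).

Definition fingen (A : algebra) : Prop :=
  exists (n : nat) (gens : 'I_n -> A), forall a : A, exists t : term 'I_n, eval gens t = a.

(* The equational class V = Mod(Sigma) axiomatized by a set Sigma of identities. *)
Definition identities := term nat -> term nat -> Prop.

Definition model (Sigma : identities) (A : algebra) : Prop :=
  forall s t, Sigma s t -> forall g : nat -> A, eval g s = eval g t.

Definition eqV (Sigma : identities) (X : Type) (s t : term X) : Prop :=
  forall B : algebra, model Sigma B -> forall g : X -> B, eval g s = eval g t.

Definition free_alg (Sigma : identities) (X : Type) : algebra :=
  @quot_alg (term_alg X) (@eqV Sigma X).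

Definition Fomega (Sigma : identities) : algebra := free_alg Sigma nat.

(* Congruence of F_V('I_n) generated by the finitely many pairs R,
   pulled back to terms: the least congruence of T('I_n) containing the
   V-identities and R. *)
Definition CgV (Sigma : identities) (n : nat) (R : seq (term 'I_n * term 'I_n))
  (s t : term 'I_n) : Prop :=
  forall th : term 'I_n -> term 'I_n -> Prop,
    congruence (A := term_alg 'I_n) th ->
    (forall s' t', eqV Sigma s' t' -> th s' t') ->
    (forall p, List.In p R -> th p.1 p.2) ->
    th s t.

Definition isomorphic (A B : algebra) : Prop :=
  exists f : A -> B, hom f /\ bijective f.

Definition FP (Sigma : identities) (A : algebra) : Prop :=
  exists (n : nat) (R : seq (term 'I_n * term 'I_n)),
    isomorphic A (@quot_alg (term_alg 'I_n) (CgV Sigma R)).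

Definition embeds_Fomega (Sigma : identities) (B : algebra) : Prop :=
  exists f : B -> Fomega Sigma, hom f /\ injective f.

Definition exact (Sigma : identities) (E : algebra) : Prop :=
  fingen E /\ embeds_Fomega Sigma E.

Definition Con_e (Sigma : identities) (A : algebra) (th : A -> A -> Prop) : Prop :=
  congruence th /\ embeds_Fomega Sigma (@quot_alg A th).

Record coexact_unifier (Sigma : identities) (A : algebra) := CoexactUnifier {
  u_target : algebra;
  u_map : A -> u_target;
  u_hom : hom u_map;
  u_onto : surjective u_map;
  u_exact : exact Sigma u_target }.

Definition unif_le (Sigma : identities) (A : algebra) (u v : coexact_unifier Sigma A) : Prop :=
  exists f : u_target v -> u_target u, hom f /\ forall a, f (u_map v a) = u_map u a.

Definition Con_e_type (Sigma : identities) (A : algebra) : Type :=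
  {th : A -> A -> Prop | Con_e Sigma th}.

Definition supseteq_le (Sigma : identities) (A : algebra) (t1 t2 : Con_e_type Sigma A) : Prop :=
  forall a b, proj1_sig t2 a b -> proj1_sig t1 a b.

End UA.

Section Types.
Variables (T : Type) (le : T -> T -> Prop).

Definition complete_set (M : T -> Prop) : Prop := forall x, exists2 m, M m & le x m.

Definition mu_set (M : T -> Prop) : Prop :=
  complete_set M /\ (forall x y, M x -> M y -> x <> y -> ~ le x y).

Definition finite_set (M : T -> Prop) : Prop :=
  exists s : list T, forall x, M x <-> List.In x s.

Inductive unif_type := type0 | type1 | type_omega | type_infty.

Definition has_type (ty : unif_type) : Prop :=
  match ty with
  | type0 => ~ exists M, mu_set M
  | type1 => exists M, mu_set M /\ exists x, forall y, M y <-> y = x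
  | type_omega => exists M, mu_set M /\ finite_set M /\
                    exists x y, [/\ M x, M y & x <> y]
  | type_infty => exists M, mu_set M /\ ~ finite_set M
  end.
End Types.

(* Since [A] is finitely generated, so is every homomorphic image of [A]; hence
   an onto [u : A -> B] is a coexact unifier exactly when [B], which is
   isomorphic to [A / ker u], embeds into [F_V(omega)], i.e. when
   [ker u] lies in [Con_e(A)]. Homomorphisms out of an onto [v] are the maps
   whose kernel contains [ker v], which gives (b). So [ker] is an order
   embedding of [C_V(A)] into [(Con_e(A), ⊇)] with section
   [theta |-> A -> A / theta]; an equivalence of preorders carries mu-sets to
   mu-sets of the same size, so both preorders have the same type. *)
From mathcomp Require Import ssreflect ssrfun ssrbool eqtype ssrnat seq fintype.
From Stdlib Require Import ClassicalEpsilon FunctionalExtensionality.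
From Stdlib Require Import PropExtensionality ProofIrrelevance Classical.
From Stdlib Require List.

Set Implicit Arguments.
Unset Strict Implicit.
Unset Printing Implicit Defensive.

Section Quotient.
Variables (T : Type) (th : T -> T -> Prop).

Lemma qclsK (x : qcar th) : qcls th (qrep x) = x.
Proof.
case: x => P HP; rewrite /qrep /qcls /=.
case: (constructive_indefinite_description _ HP) => a0 e /=.
by subst P; f_equal; apply: proof_irrelevance.
Qed.

Lemma qcls_surjective : surjective (qcls th).
Proof. by move=> x; exists (qrep x); apply: qclsK. Qed.

Hypotheses (th_refl : forall a, th a a) (th_sym : forall a b, th a b -> th b a)
  (th_trans : forall a b c, th a b -> th b c -> th a c).

Lemma qcls_eq a b : th a b -> qcls th a = qcls th b.
Proof.
move=> hab; have E : th a = th b.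
  apply: functional_extensionality => x; apply: propositional_extensionality.
  by split=> h; [apply: th_trans (th_sym hab) h | apply: th_trans hab h].
by apply: subset_eq_compat.
Qed.

Lemma qcls_inj a b : qcls th a = qcls th b -> th a b.
Proof. by move=> /(congr1 (@proj1_sig _ _)) /= ->; apply: th_refl. Qed.

Lemma ker_qcls : ker (qcls th) = th.
Proof.
apply: functional_extensionality => a; apply: functional_extensionality => b.
by apply: propositional_extensionality; split; [apply: qcls_inj | apply: qcls_eq].
Qed.

End Quotient.

Section Algebras.
Variable S : signature.
Implicit Types A B C : algebra S.

Definition embeds A B : Prop := exists f : A -> B, hom f /\ injective f.

Lemma embeds_trans A B C : embeds A B -> embeds B C -> embeds A C.
Proof.
case=> [f [hf injf]] [g [hg injg]]; exists (g \o f); split; last exact: inj_comp.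
by move=> o args /=; rewrite hf hg.
Qed.

Lemma eval_hom A B (h : A -> B) (X : Type) (g : X -> A) :
  hom h -> forall t, eval (h \o g) t = h (eval g t).
Proof.
move=> hh; elim=> [x|o args IH] //=.
by rewrite hh; f_equal; apply: functional_extensionality => i; apply: IH.
Qed.

Lemma eval_Var (X : Type) (t : term S X) : eval (A := term_alg S X) (@Var S X) t = t.
Proof.
elim: t => [x|o args IH] //=.
by f_equal; apply: functional_extensionality => i; apply: IH.
Qed.

Lemma hom_inverse A B (f : A -> B) (g : B -> A) :
  hom f -> cancel f g -> cancel g f -> hom g.
Proof.
move=> hf fK gK o args; apply: (can_inj fK); rewrite gK hf.
by f_equal; apply: functional_extensionality => i; rewrite gK.
Qed.

Lemma fingen_term_alg n : fingen (term_alg S 'I_n).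
Proof. by exists n, (@Var S 'I_n) => t; exists t; apply: eval_Var. Qed.

Lemma fingen_image A B (u : A -> B) : hom u -> surjective u -> fingen A -> fingen B.
Proof.
move=> hu su [n [gens gensP]]; exists n, (u \o gens) => b.
case: (su b) => a <-; case: (gensP a) => t <-; exists t; exact: eval_hom.
Qed.

Lemma ker_congruence A B (u : A -> B) : hom u -> congruence (ker u).
Proof.
move=> hu; split=> [a|a b|a b c|o a b eqab]; rewrite /ker //; first by move=> -> ->.
by rewrite !hu; f_equal; apply: functional_extensionality.
Qed.

Lemma qcls_hom A (th : A -> A -> Prop) :
  congruence th -> hom (B := quot_alg th) (qcls th).
Proof.
case=> th_refl th_sym th_trans th_interp o args /=.
apply: qcls_eq => //; apply: th_interp => i.
by apply: th_sym; apply: (qcls_inj th_refl); rewrite qclsK.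
Qed.

Lemma CgV_congruence (Sigma : identities S) n (R : seq (term S 'I_n * term S 'I_n)) :
  congruence (A := term_alg S 'I_n) (CgV Sigma R).
Proof.
split.
- by move=> a th [th_refl _ _ _] _ _; apply: th_refl.
- by move=> a b h th thC hV hR; case: (thC) => _ th_sym _ _; apply: th_sym; apply: h.
- move=> a b c h h' th thC hV hR; case: (thC) => _ _ th_trans _.
  exact: th_trans (h _ _ _ _) (h' _ _ _ _).
- move=> o a b h th thC hV hR; case: (thC) => _ _ _ th_interp.
  by apply: th_interp => i; apply: h.
Qed.

Lemma fingen_FP (Sigma : identities S) A : FP Sigma A -> fingen A.
Proof.
case=> n [R [f [hf [g fK gK]]]]; have CgR := CgV_congruence Sigma R.
apply: (@fingen_image _ _ g (hom_inverse hf fK gK)); first by move=> a; exists (f a).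
exact: fingen_image (qcls_hom CgR) (@qcls_surjective _ _) (fingen_term_alg n).
Qed.

Lemma hom_factor A B C (v : A -> B) (u : A -> C) :
  hom v -> surjective v -> hom u -> (forall a b, ker v a b -> ker u a b) ->
  exists f : B -> C, hom f /\ forall a, f (v a) = u a.
Proof.
move=> hv sv hu keruv.
pose pre b := proj1_sig (constructive_indefinite_description _ (sv b)).
have preK b : v (pre b) = b by rewrite /pre; case: constructive_indefinite_description.
exists (u \o pre); split=> [o args|a] /=; last by apply: keruv; rewrite /ker preK.
rewrite -hu; apply: keruv; rewrite /ker preK hv.
by f_equal; apply: functional_extensionality => i; rewrite preK.
Qed.

Lemma quot_ker_embeds A B (u : A -> B) : hom u -> embeds (quot_alg (ker u)) B.
Proof.
move=> hu; have kerC := ker_congruence hu; case: (kerC) => ker_refl ker_sym ker_trans _.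
have [|f [hf fq]] := hom_factor (qcls_hom kerC) (@qcls_surjective _ _) hu.
  by move=> a b /(qcls_inj ker_refl).
by exists f; split=> // x y; rewrite -(qclsK x) -(qclsK y) !fq => /(qcls_eq ker_sym ker_trans).
Qed.

Lemma embeds_quot_ker A B (u : A -> B) :
  hom u -> surjective u -> embeds B (quot_alg (ker u)).
Proof.
move=> hu su; have [ker_refl ker_sym ker_trans _] := ker_congruence hu.
have [|f [hf fu]] := hom_factor hu su (qcls_hom (ker_congruence hu)).
  by move=> a b; apply: qcls_eq.
exists f; split=> // b b'; case: (su b) => a <-; case: (su b') => a' <-.
by rewrite !fu => /(qcls_inj ker_refl).
Qed.

Lemma exact_iff_Con_e_ker (Sigma : identities S) A B (u : A -> B) :
  FP Sigma A -> hom u -> surjective u -> (exact Sigma B <-> Con_e Sigma (ker u)).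
Proof.
move=> hA hu su; split=> [[_ embB]|[_ embQ]].
- by split; [apply: ker_congruence | apply: embeds_trans (quot_ker_embeds hu) embB].
- split; first exact: fingen_image hu su (fingen_FP hA).
  exact: embeds_trans (embeds_quot_ker hu su) embQ.
Qed.

Lemma unif_le_ker (Sigma : identities S) A (u v : coexact_unifier Sigma A) :
  unif_le u v <-> (forall a b, ker (u_map v) a b -> ker (u_map u) a b).
Proof.
split=> [[f [_ fv]] a b|keruv]; first by rewrite /ker -!fv => ->.
exact: hom_factor (u_hom v) (@u_onto _ _ _ v) (u_hom u) keruv.
Qed.

Lemma exact_quot (Sigma : identities S) A (th : A -> A -> Prop) :
  FP Sigma A -> Con_e Sigma th -> exact Sigma (quot_alg th).
Proof.
move=> hA [thC embQ]; split=> //.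
exact: fingen_image (qcls_hom thC) (@qcls_surjective _ _) (fingen_FP hA).
Qed.

Definition quotient_unifier (Sigma : identities S) A (hA : FP Sigma A)
  (th : A -> A -> Prop) (thE : Con_e Sigma th) : coexact_unifier Sigma A :=
  CoexactUnifier (qcls_hom (proj1 thE)) (@qcls_surjective _ _) (exact_quot hA thE).

Lemma ker_quotient_unifier (Sigma : identities S) A (hA : FP Sigma A)
  (th : A -> A -> Prop) (thE : Con_e Sigma th) :
  ker (u_map (quotient_unifier hA thE)) = th.
Proof. by case: (proj1 thE) => th_refl th_sym th_trans _; apply: ker_qcls. Qed.

End Algebras.

Definition image_set (T1 T2 : Type) (phi : T1 -> T2) (M : T1 -> Prop) : T2 -> Prop :=
  fun y => exists2 x, M x & phi x = y.

Lemma finite_set_preimage (T1 T2 : Type) (phi : T1 -> T2) (M : T1 -> Prop) :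
  (forall x y, M x -> M y -> phi x = phi y -> x = y) ->
  finite_set (image_set phi M) -> finite_set M.
Proof.
move=> phi_inj [s sP].
have [l [lM lphi]] : exists l, (forall x, List.In x l -> M x) /\
    (forall y, List.In y s -> exists2 x, List.In x l & phi x = y).
  have: forall y, List.In y s -> image_set phi M y by move=> y /sP.
  elim: s {sP} => [|y s IH] sM; first by exists nil.
  have [x Mx <-] := sM y (or_introl erefl).
  have [z zs|l [lM lphi]] := IH; first by apply: sM; right.
  exists (x :: l); split=> [z [<-|zl]|z [<-|zs]]; [by []|exact: lM|by exists x => //; left|].
  by have [w wl <-] := lphi z zs; exists w => //; right.
exists l => x; split=> [Mx|/lM //].
have [|w wl] := lphi (phi x); first by apply/sP; exists x.
by move=> /(phi_inj _ _ (lM _ wl) Mx) <-.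
Qed.

Section TypeTransfer.
Variables (T1 T2 : Type) (le1 : T1 -> T1 -> Prop) (le2 : T2 -> T2 -> Prop) (phi : T1 -> T2).
Hypotheses (le2_refl : forall y, le2 y y)
  (le2_trans : forall x y z, le2 x y -> le2 y z -> le2 x z)
  (phi_embedding : forall x y, le1 x y <-> le2 (phi x) (phi y))
  (phi_cofinal : forall y, exists x, le2 y (phi x)).

Lemma mu_set_inj M : mu_set le1 M -> forall x y, M x -> M y -> phi x = phi y -> x = y.
Proof.
case=> _ M_antichain x y Mx My Exy; apply: NNPP => nxy.
by apply: (M_antichain x y Mx My nxy); apply/phi_embedding; rewrite Exy.
Qed.

Lemma mu_set_image M : mu_set le1 M -> mu_set le2 (image_set phi M).
Proof.
case=> M_complete M_antichain; split=> [y|x' y' [x Mx <-] [y My <-] nxy /phi_embedding].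
- have [x yx] := phi_cofinal y; have [m Mm xm] := M_complete x.
  by exists (phi m); [exists m | apply: le2_trans yx (proj1 (phi_embedding _ _) xm)].
- by apply: M_antichain => // Exy; apply: nxy; rewrite Exy.
Qed.

Lemma has_type_image ty : ty <> type0 -> has_type le1 ty -> has_type le2 ty.
Proof.
case: ty => // _ /= [M [muM Mty]]; exists (image_set phi M); split; try exact: mu_set_image.
- case: Mty => x Mx; exists (phi x) => y; split=> [[z /Mx -> <-] //|->].
  by exists x => //; apply/Mx.
- case: Mty => [[s sP] [x [y [Mx My nxy]]]]; split.
  + exists (List.map phi s) => z; split=> [[w /sP ws <-]|].
      exact: List.in_map.
    by case/List.in_map_iff => w [<- /sP Mw]; exists w.
  + exists (phi x), (phi y); split; [by exists x | by exists y |].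
    by move=> /(mu_set_inj muM Mx My).
- by move=> /(finite_set_preimage (mu_set_inj muM)).
Qed.

End TypeTransfer.

Lemma has_type_equiv (T1 T2 : Type) (le1 : T1 -> T1 -> Prop) (le2 : T2 -> T2 -> Prop)
  (phi : T1 -> T2) (psi : T2 -> T1) :
  (forall y, le2 y y) -> (forall x y z, le2 x y -> le2 y z -> le2 x z) ->
  (forall x y, le1 x y <-> le2 (phi x) (phi y)) -> cancel psi phi ->
  forall ty, has_type le1 ty <-> has_type le2 ty.
Proof.
move=> le2_refl le2_trans phi_emb psiK.
have le1_refl x : le1 x x by apply/phi_emb.
have le1_trans x y z : le1 x y -> le1 y z -> le1 x z.
  by move=> /phi_emb xy /phi_emb yz; apply/phi_emb/(le2_trans _ _ _ xy yz).
have psi_emb x y : le2 x y <-> le1 (psi x) (psi y) by rewrite phi_emb !psiK.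
have phi_cof y : exists x, le2 y (phi x) by exists (psi y); rewrite psiK.
have psi_cof x : exists y, le1 x (psi y) by exists (phi x); apply/phi_emb; rewrite psiK.
have phi_types := has_type_image le2_refl le2_trans phi_emb phi_cof.
have psi_types := has_type_image le1_refl le1_trans psi_emb psi_cof.
case=> [|||]; try by split; [apply: phi_types | apply: psi_types].
split=> /= no_mu [M muM]; apply: no_mu.
- by exists (image_set psi M); apply: (mu_set_image le1_trans psi_emb psi_cof).
- by exists (image_set phi M); apply: (mu_set_image le2_trans phi_emb phi_cof).
Qed.

Theorem theorem3p7 (S : signature) (Sigma : identities S) (A : algebra S)
  (hA : FP Sigma A) :
  (* (a) *)
  (forall (B : algebra S) (u : A -> B), hom u -> surjective u ->
     (exact Sigma B <-> Con_e Sigma (ker u))) /\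
  (* (b) *)
  (forall u v : coexact_unifier Sigma A,
     unif_le u v <-> (forall a b, ker (u_map v) a b -> ker (u_map u) a b)) /\
  (* every theta in Con_e(A) is (equivalent to) ker(u) for some u in C_V(A) *)
  (forall th : A -> A -> Prop, Con_e Sigma th ->
     exists u : coexact_unifier Sigma A, forall a b, th a b <-> ker (u_map u) a b) /\
  (* type(C_V(A)) = type(Con_e(A), superseteq) *)
  (forall ty : unif_type,
     has_type (@unif_le S Sigma A) ty <-> has_type (@supseteq_le S Sigma A) ty).
Proof.
split; first by move=> B u; apply: exact_iff_Con_e_ker.
split; first exact: unif_le_ker.
split.
  by move=> th thE; exists (quotient_unifier hA thE) => a b; rewrite ker_quotient_unifier.
pose ker_e (u : coexact_unifier Sigma A) : Con_e_type Sigma A :=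
  exist _ (ker (u_map u)) (proj1 (exact_iff_Con_e_ker hA (u_hom u) (@u_onto _ _ _ u)) (u_exact u)).
pose quot_e (k : Con_e_type Sigma A) := quotient_unifier hA (proj2_sig k).
apply: (@has_type_equiv _ _ _ _ ker_e quot_e).
- by move=> k a b.
- by move=> k1 k2 k3 k12 k23 a b /k23 /k12.
- exact: unif_le_ker.
- by case=> th thE; apply: subset_eq_compat; apply: ker_quotient_unifier.
Qed.
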